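(* Let $R$ be a local ring and $s\in R$ a central element with $s\in J(R)$. Then $A\in M_2(R;s)$ is strongly $J$-clean if and only if one of the following holds: (1) $A\in J\big(M_2(R;s)\big)$; (2) $I_2-A\in J\big(M_2(R;s)\big)$; (3) $A$ is similar to $\left[\begin{smallmatrix} u&1\\ v&w\end{smallmatrix}\right]$ for some $u\in 1+J(R)$, $v\in U(R)$, $w\in J(R)$ such that the equation $t^2-(vuv^{-1}+w)t+(vuv^{-1}w-s^2v)=0$ has a right root in $1+J(R)$ and the equation $t^2-(u+w)t+(wu-s^2v)=0$ has a right root in $J(R)$; (4) $A$ is similar to $\left[\begin{smallmatrix} w&1\\ v&u\end{smallmatrix}\right]$ for some $u\in 1+J(R)$, $v\in U(R)$, $w\in J(R)$ such that the equation $t^2-(u+vwv^{-1})t+(vwv^{-1}u-s^2v)=0$ has a right root in $J(R)$ and the equation $t^2-(u+w)t+(uw-s^2v)=0$ has a right root in $1+J(R)$.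
   Context: All rings are associative with identity. A ring $R$ is local if $R/J(R)$ is a division ring, where $J(R)$ is the Jacobson radical; $U(R)$ is the group of units. For $a,b\in R$, an element $r\in R$ is a right root of $t^2-at+b$ if $r^2-ar+b=0$. For a ring $R$ and a central element $s\in R$, $M_2(R;s)$ denotes the ring whose elements are the $2\times 2$ arrays $\left[\begin{smallmatrix} a&b\\ c&d\end{smallmatrix}\right]$ with $a,b,c,d\in R$, with componentwise addition and multiplication $\left[\begin{smallmatrix} a&b\\ c&d\end{smallmatrix}\right]\left[\begin{smallmatrix} a'&b'\\ c'&d'\end{smallmatrix}\right]=\left[\begin{smallmatrix} aa'+s^2bc'&ab'+bd'\\ ca'+dc'&s^2cb'+dd'\end{smallmatrix}\right]$, with identity $I_2$. Two elements $A,B\in M_2(R;s)$ are similar if $B=P^{-1}AP$ for some unit $P$ of $M_2(R;s)$. An element $a$ of a ring $T$ is strongly $J$-clean if there is an idempotent $e\in T$ with $ae=ea$ and $a-e\in J(T)$. *)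

From HB Require Import structures.
From mathcomp Require Import all_boot all_order all_algebra.
Set Implicit Arguments. Unset Strict Implicit. Unset Printing Implicit Defensive.
Import GRing.Theory.
Local Open Scope ring_scope.

Definition central_elt (R : nzRingType) (s : R) := forall x : R, s * x = x * s.

Record cent (R : nzRingType) := Cent { cval :> R; cvalP : central_elt cval }.

Definition csq (R : nzRingType) (s : cent R) : R := cval s * cval s.
Arguments csq : simpl never.

Lemma csqC (R : nzRingType) (s : cent R) (x : R) : x * csq s = csq s * x.
Proof. by rewrite /csq mulrA -cvalP -mulrA -cvalP mulrA. Qed.

(** The ring M_2(R;s): 2x2 arrays [a b; c d] stored as ((a, b), c, d). *)
Definition M2s (R : nzRingType) (s : cent R) : Type := (R * R * R * R)%type.

Section M2sRing.
Variables (R : nzRingType) (s : cent R).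
Local Notation M := (M2s s).
HB.instance Definition _ := GRing.Zmodule.on M.

Definition mx2 (a b c d : R) : M := (a, b, c, d).
Definition e11 (A : M) : R := A.1.1.1.
Definition e12 (A : M) : R := A.1.1.2.
Definition e21 (A : M) : R := A.1.2.
Definition e22 (A : M) : R := A.2.

Definition m2mul (A B : M) : M :=
  mx2 (e11 A * e11 B + csq s * (e12 A * e21 B))
      (e11 A * e12 B + e12 A * e22 B)
      (e21 A * e11 B + e22 A * e21 B)
      (csq s * (e21 A * e12 B) + e22 A * e22 B).

Definition m2one : M := mx2 1 0 0 1.

Lemma m2mulA : associative m2mul.
Proof.
move=> [[[a b] c] d] [[[a' b'] c'] d'] [[[a'' b''] c''] d''].
rewrite /m2mul /mx2 /e11 /e12 /e21 /e22 /=.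
congr (_, _, _, _);
  rewrite !(mulrDl, mulrDr, mulrA, csqC, addrA);
  congr (_ + _); rewrite -!addrA; congr (_ + _); exact: addrC.
Qed.

Lemma m2mul1 : left_id m2one m2mul.
Proof.
move=> [[[a b] c] d]; rewrite /m2mul /m2one /mx2 /e11 /e12 /e21 /e22 /=.
by rewrite !(mul1r, mul0r, mulr0, addr0, add0r).
Qed.

Lemma m2mulr1 : right_id m2one m2mul.
Proof.
move=> [[[a b] c] d]; rewrite /m2mul /m2one /mx2 /e11 /e12 /e21 /e22 /=.
by rewrite !(mulr1, mul0r, mulr0, addr0, add0r).
Qed.

Lemma m2mulDl : left_distributive m2mul +%R.
Proof.
move=> [[[a b] c] d] [[[a' b'] c'] d'] [[[a'' b''] c''] d''].
rewrite /m2mul /mx2 /e11 /e12 /e21 /e22 /=.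
congr (_, _, _, _); rewrite !(mulrDl, mulrDr); by rewrite addrACA.
Qed.

Lemma m2mulDr : right_distributive m2mul +%R.
Proof.
move=> [[[a b] c] d] [[[a' b'] c'] d'] [[[a'' b''] c''] d''].
rewrite /m2mul /mx2 /e11 /e12 /e21 /e22 /=.
congr (_, _, _, _); rewrite !(mulrDl, mulrDr); by rewrite addrACA.
Qed.

Lemma m2one_neq0 : m2one != 0.
Proof. by apply/eqP => /(congr1 (fun A : M => A.2)) /= /eqP; rewrite oner_eq0. Qed.

HB.instance Definition _ := GRing.Zmodule_isNzRing.Build M
  m2mulA m2mul1 m2mulr1 m2mulDl m2mulDr m2one_neq0.
End M2sRing.

Section RingNotions.
Variable T : nzRingType.

Definition left_ideal (I : T -> Prop) : Prop :=
  I 0 /\ (forall x y, I x -> I y -> I (x - y)) /\ (forall r x, I x -> I (r * x)).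

Definition maximal_left_ideal (I : T -> Prop) : Prop :=
  left_ideal I /\ ~ I 1 /\
  (forall K : T -> Prop, left_ideal K -> ~ K 1 -> (forall x, I x -> K x) ->
     forall x, K x -> I x).

Definition jacobson (x : T) : Prop :=
  forall I : T -> Prop, maximal_left_ideal I -> I x.

Definition is_unit (x : T) : Prop := exists y, x * y = 1 /\ y * x = 1.

(* R/J(R) is a division ring: it is nonzero and every nonzero class is
   (two-sided) invertible modulo J(R). *)
Definition local_ring : Prop :=
  ~ jacobson 1 /\
  forall x, ~ jacobson x -> exists y, jacobson (x * y - 1) /\ jacobson (y * x - 1).

Definition right_root (a b r : T) : Prop := r ^+ 2 - a * r + b = 0.

Definition similar_elt (A B : T) : Prop :=
  exists P Q : T, P * Q = 1 /\ Q * P = 1 /\ B = Q * A * P.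

Definition strongly_J_clean (a : T) : Prop :=
  exists e : T, e * e = e /\ a * e = e * a /\ jacobson (a - e).

End RingNotions.

(* A strongly J-clean A = e + j has an idempotent e whose diagonal entries are
   idempotent modulo J(R), hence congruent to 0 or 1 since R is local.  As s lies
   in J(R), the radical of M_2(R;s) consists of the arrays whose diagonal entries
   lie in J(R); so e is congruent to 0, 1, E11 or E22.  Congruent idempotents are
   conjugate, hence A or 1 - A lies in the radical, or A is similar to diag(a, d)
   with (a, d) congruent to (1, 0) or (0, 1).  Finally [[x, 1], [v, y]] is
   similar to diag(a, b) through P = [[v^-1 (a - y), 1], [1, b - x]] exactly when
   a and b are right roots of the two quadratics of conditions (3) and (4).
   Conversely, for diag(a, d) with a - d a unit, taking x = a - s^2 and a top
   left entry 1 in P forces a unique v, congruent to a - d when a and d commute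
   modulo J(R). *)

From HB Require Import structures.
From mathcomp Require Import all_boot all_order all_algebra.
From mathcomp Require Import boolp classical_sets.
Import GRing.Theory.
Local Open Scope ring_scope.
Set Implicit Arguments. Unset Strict Implicit.

(* Identities in an additive group whose atoms are arbitrary terms, typically
   products in a noncommutative ring, where the [ring] tactic does not apply.
   Both sides are reflected into formal sums and compared coefficientwise. *)
Section AbelianNormalization.
Variable V : zmodType.

Inductive zexpr := ZAtom of nat | ZAdd of zexpr & zexpr | ZOpp of zexpr | ZZero.

Fixpoint zeval (env : seq V) (e : zexpr) : V :=
  match e with
  | ZAtom n => nth 0 env n
  | ZAdd a b => zeval env a + zeval env b
  | ZOpp a => - zeval env a
  | ZZero => 0
  end.

Fixpoint zcoef (e : zexpr) (n : nat) : int :=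
  match e with
  | ZAtom m => (m == n)%:Z
  | ZAdd a b => zcoef a n + zcoef b n
  | ZOpp a => - zcoef a n
  | ZZero => 0
  end.

Lemma zeval_coef env e :
  zeval env e = \sum_(i < size env) nth 0 env i *~ zcoef e i.
Proof.
elim: e => [m|a IHa b IHb|a IHa|] /=.
- case: (ltnP m (size env)) => hm.
  + rewrite (bigD1 (Ordinal hm)) //= eqxx mulr1z big1 ?addr0 // => i /eqP ne.
    by rewrite (_ : (m == i) = false) ?mulr0z //; apply/negP => /eqP e;
      apply: ne; apply: val_inj.
  + rewrite nth_default // big1 // => i _.
    rewrite (_ : (m == i) = false) ?mulr0z //; apply/negP => /eqP e.
    by move: (ltn_ord i); rewrite -e ltnNge hm.
- by rewrite IHa IHb -big_split; apply: eq_bigr => i _; rewrite mulrzDr.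
- by rewrite IHa -sumrN; apply: eq_bigr => i _; rewrite mulrNz.
- by rewrite big1 // => i _; rewrite mulr0z.
Qed.

Lemma zeval_eq env e1 e2 :
  all (fun n => zcoef e1 n == zcoef e2 n) (iota 0 (size env)) ->
  zeval env e1 = zeval env e2.
Proof.
move=> /allP H; rewrite !zeval_coef; apply: eq_bigr => i _.
have /eqP -> // : zcoef e1 i == zcoef e2 i.
by apply: H; rewrite mem_iota leq0n add0n ltn_ord.
Qed.

End AbelianNormalization.

(* Atoms are compared up to conversion, so that differently elaborated copies
   of the same term are identified. *)
Ltac abel_convertible x t :=
  match goal with
  | _ => let _ := constr:(ltac:(unify x t; exact I) : True) in constr:(true)
  | _ => constr:(false)
  end.
Ltac abel_mem t l :=
  lazymatch l with
  | ?x :: ?l' => let b := abel_convertible x t in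
      lazymatch b with true => constr:(true) | false => abel_mem t l' end
  | _ => constr:(false)
  end.
Ltac abel_atoms acc t :=
  match t with
  | (?a + ?b)%R => let acc1 := abel_atoms acc a in abel_atoms acc1 b
  | (- ?a)%R => abel_atoms acc a
  | 0%R => acc
  | _ => let b := abel_mem t acc in
         lazymatch b with true => acc | false => constr:(t :: acc) end
  end.
Ltac abel_index t l :=
  lazymatch l with
  | ?x :: ?l' => let b := abel_convertible x t in
      lazymatch b with
      | true => constr:(0%nat)
      | false => let n := abel_index t l' in constr:(S n)
      end
  end.
Ltac abel_reify l t :=
  match t with
  | (?a + ?b)%R => let x := abel_reify l a in let y := abel_reify l b in
                   constr:(ZAdd x y)
  | (- ?a)%R => let x := abel_reify l a in constr:(ZOpp x)
  | 0%R => constr:(ZZero)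
  | _ => let n := abel_index t l in constr:(ZAtom n)
  end.
Ltac abel :=
  match goal with |- @eq ?V ?L ?R =>
    let l0 := abel_atoms (@nil V) L in let l := abel_atoms l0 R in
    let eL := abel_reify l L in let eR := abel_reify l R in
    change (@zeval V l eL = @zeval V l eR); apply: zeval_eq;
    vm_compute; reflexivity
  end.

Ltac expand := rewrite ?(mulrDl, mulrDr, mulrBl, mulrBr, mulNr, mulrN, opprK,
  opprD, mul1r, mulr1, mul0r, mulr0, mulrA, addr0, add0r, oppr0).

Ltac noncomm_ring := expand; abel.

Section Jacobson.
Variable T : nzRingType.
Implicit Types x y r : T.
Local Notation J := (@jacobson T).

Lemma jacobson0 : J 0. Proof. by move=> I [[I0 _] _]. Qed.

Lemma jacobsonB x y : J x -> J y -> J (x - y).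
Proof. by move=> Jx Jy I hI; case: (hI) => [[_ [IB _]] _]; exact: IB (Jx _ hI) (Jy _ hI). Qed.

Lemma jacobsonMl r x : J x -> J (r * x).
Proof. by move=> Jx I hI; case: (hI) => [[_ [_ IM]] _]; exact: IM (Jx _ hI). Qed.

Lemma jacobsonN x : J x -> J (- x).
Proof. by move=> Jx; rewrite -sub0r; exact: jacobsonB jacobson0 Jx. Qed.

Lemma jacobsonD x y : J x -> J y -> J (x + y).
Proof. by move=> Jx /jacobsonN Jy; rewrite -[y]opprK; exact: jacobsonB. Qed.

Lemma jacobson_eq0 x : x = 0 -> J x. Proof. by move->; exact: jacobson0. Qed.

Lemma jacobson_addl h x : J h -> J (x - h) -> J x.
Proof. by move=> Jh /jacobsonD /(_ Jh); rewrite subrK. Qed.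

Lemma jacobson_subl h x : J h -> J (x + h) -> J x.
Proof. by move=> Jh /jacobsonB /(_ Jh); rewrite addrK. Qed.

End Jacobson.

(* [jacobson_combine (H1, ..., Hn)] closes [jacobson x] when x is a signed sum
   of the elements that H1, ..., Hn place in the radical. *)
Ltac jacobson_combine hs :=
  lazymatch hs with
  | (?rest, ?h) =>
      (apply: (jacobson_addl h) + apply: (jacobson_subl h)); jacobson_combine rest
  | _ =>
      (apply: (jacobson_addl hs) + apply: (jacobson_subl hs));
      apply: jacobson_eq0; noncomm_ring
  end.

Section MaximalLeftIdeals.
Variable T : nzRingType.

Definition proper_left_ideal_over (L I : T -> Prop) : Prop :=
  [/\ left_ideal I, ~ I 1 & forall x, L x -> I x].

Lemma exists_maximal_left_ideal (L : T -> Prop) : left_ideal L -> ~ L 1 ->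
  exists2 I, maximal_left_ideal I & forall x, L x -> I x.
Proof.
move=> idL nL1.
pose S := {I : T -> Prop | proper_left_ideal_over L I}.
pose incl (I K : S) := `[< forall x, sval I x -> sval K x >].
have L0 : S by exists L.
have [||F Ftot|K Kmax] := ZL_preorder L0 (R := incl).
- by move=> I; apply/asboolP.
- by move=> I K N /asboolP IK /asboolP KN; apply/asboolP => x /IK /KN.
- have [[I0 FI0]|noF] := pselect (exists I, F I); last first.
    by exists L0 => I FI; case: noF; exists I.
  pose U x := exists2 I, F I & sval I x.
  suff hU : proper_left_ideal_over L U.
    by exists (exist _ U hU) => I FI; apply/asboolP => x Ix; exists I.
  have common I K x y : F I -> F K -> sval I x -> sval K y ->
      exists2 N, F N & sval N x /\ sval N y.
    move=> FI FK Ix Ky; case: (Ftot I K FI FK) => /asboolP sub.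
    + by exists K => //; split => //; exact: sub.
    + by exists I => //; split => //; exact: sub.
  split; first split.
  + by exists I0 => //; case: (svalP I0) => [[]].
  + split.
    * move=> x y [I FI Ix] [K FK Ky]; have [N FN [Nx Ny]] := common I K x y FI FK Ix Ky.
      by exists N => //; case: (svalP N) => [[_ [NB _]] _ _]; exact: NB.
    * by move=> r x [I FI Ix]; exists I => //; case: (svalP I) => [[_ [_ IM]] _ _]; exact: IM.
  + by move=> [I FI I1]; case: (svalP I) => _ /(_ I1).
  + by move=> x Lx; exists I0 => //; case: (svalP I0) => _ _; exact.
- case: K Kmax => K [idK nK1 LK] Kmax; exists K => //; split => //; split => //.
  move=> N idN nN1 KN x Nx.
  have LN y : L y -> N y by move=> /LK /KN.
  by have /asboolP := Kmax (exist _ N (And3 idN nN1 LN)) (asboolT KN); exact.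
Qed.

End MaximalLeftIdeals.

Section JacobsonUnits.
Variable T : nzRingType.
Implicit Types x y r : T.
Local Notation J := (@jacobson T).

Lemma jacobson_linv x : J x -> exists y, y * (1 - x) = 1.
Proof.
move=> Jx; apply: contrapT => nlinv.
pose L z := exists r, z = r * (1 - x).
have idL : left_ideal L.
  split; first by exists 0; rewrite mul0r.
  split; first by move=> _ _ [r ->] [r' ->]; exists (r - r'); rewrite mulrBl.
  by move=> c _ [r ->]; exists (c * r); rewrite mulrA.
have nL1 : ~ L 1 by move=> [r e]; apply: nlinv; exists r.
have [I Imax LI] := exists_maximal_left_ideal idL nL1.
have Ix : I x := Jx I Imax.
have I1x : I (1 - x) by apply: LI; exists 1; rewrite mul1r.
case: Imax => [[I0 [IB _]] [nI1 _]].
by apply: nI1; rewrite (_ : 1 = (1 - x) - (0 - x)); [apply: (IB) => //; exact: IB | abel].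
Qed.

Lemma jacobson_of_linv x : (forall r, exists y, y * (1 - r * x) = 1) -> J x.
Proof.
move=> linv I [[I0 [IB IM]] [nI1 Imax]]; apply: contrapT => nIx.
pose K z := exists i r, I i /\ z = i + r * x.
have idK : left_ideal K.
  split; first by exists 0, 0; rewrite mul0r addr0.
  split.
  - move=> _ _ [i [r [Ii ->]]] [i' [r' [Ii' ->]]]; exists (i - i'), (r - r').
    by split; [exact: IB | noncomm_ring].
  - move=> c _ [i [r [Ii ->]]]; exists (c * i), (c * r).
    by split; [exact: IM | noncomm_ring].
have IK z : I z -> K z by move=> Iz; exists z, 0; rewrite mul0r addr0.
have [[i [r [Ii e1]]]|nK1] := pselect (K 1).
  have [y hy] := linv r; apply: nI1; rewrite -hy; apply: IM.
  by rewrite (_ : 1 - r * x = i) // e1; abel.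
by apply: nIx; apply: (Imax K idK nK1 IK); exists 0, 1; rewrite mul1r add0r.
Qed.

Lemma jacobsonP x : J x <-> forall r, exists y, y * (1 - r * x) = 1.
Proof.
split; last exact: jacobson_of_linv.
by move=> Jx r; apply: jacobson_linv; exact: jacobsonMl.
Qed.

Lemma unit_of_inverses x l r : l * x = 1 -> x * r = 1 -> is_unit x.
Proof.
move=> hl hr; have lr : l = r by rewrite -[l]mulr1 -hr mulrA hl mul1r.
by exists r; split => //; rewrite -lr.
Qed.

Lemma jacobson_unit x : J x -> is_unit (1 - x).
Proof.
move=> Jx; have [y hy] := jacobson_linv Jx.
have ey : y = 1 - - (y * x) by rewrite -{1}hy; noncomm_ring.
have [z hz] := jacobson_linv (jacobsonN (jacobsonMl y Jx)); rewrite -ey in hz.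
have ez : z = 1 - x by rewrite -[z]mulr1 -{1}hy mulrA hz mul1r.
by exists y; split => //; rewrite -ez.
Qed.

Lemma jacobsonMr x r : J x -> J (x * r).
Proof.
(* 1 + r' x c r inverts 1 - r' x r on the left when c inverts 1 - r r' x. *)
move=> Jx; apply: jacobson_of_linv => r'.
have [c [_ hc]] := jacobson_unit (jacobsonMl (r * r') Jx).
exists (1 + r' * x * c * r).
have hc' : c * (r * r' * x) = c - 1 by rewrite -[in RHS]hc; noncomm_ring.
have : r' * x * (c * (r * r' * x)) * r = r' * x * c * r - r' * x * r.
  by rewrite hc'; noncomm_ring.
by expand => h; rewrite h; abel.
Qed.

Lemma unitM x y : is_unit x -> is_unit y -> is_unit (x * y).
Proof.
move=> [x' [hx1 hx2]] [y' [hy1 hy2]]; exists (y' * x'); split.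
- by rewrite mulrA -(mulrA x) hy1 mulr1.
- by rewrite mulrA -(mulrA y') hx2 mulr1.
Qed.

Lemma unitN x : is_unit x -> is_unit (- x).
Proof. by move=> [x' [h1 h2]]; exists (- x'); rewrite !mulrNN. Qed.

Lemma unit_subr_jacobson x y : is_unit x -> J y -> is_unit (x - y).
Proof.
move=> ux Jy; have [x' [hx _]] := ux.
rewrite (_ : x - y = x * (1 - x' * y)); last by rewrite mulrBr mulr1 mulrA hx mul1r.
exact: unitM ux (jacobson_unit (jacobsonMl x' Jy)).
Qed.

Lemma unit_of_jacobson x : J (x - 1) -> is_unit x.
Proof. by move=> /jacobsonN /jacobson_unit; rewrite opprB subKr. Qed.

Lemma unit_of_jacobsonN x : J (x + 1) -> is_unit x.
Proof. by move=> h; rewrite -[x]opprK; apply/unitN/unit_of_jacobson; jacobson_combine h. Qed.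

End JacobsonUnits.

Section Similarity.
Variable T : nzRingType.
Implicit Types A B C e E : T.

Lemma similar_trans A B C : similar_elt A B -> similar_elt B C -> similar_elt A C.
Proof.
move=> [P [Q [h1 [h2 ->]]]] [P' [Q' [h1' [h2' ->]]]]; exists (P * P'), (Q' * Q).
split; first by rewrite -mulrA (mulrA P') h1' mul1r.
split; first by rewrite -mulrA (mulrA Q) h2 mul1r.
by rewrite !mulrA.
Qed.

Lemma similar_sym A B : similar_elt A B -> similar_elt B A.
Proof.
move=> [P [Q [hPQ [hQP ->]]]]; exists Q, P; split => //; split => //.
by rewrite !mulrA hPQ mul1r -mulrA hPQ mulr1.
Qed.

Lemma similar_of_intertwine A B P Q : P * Q = 1 -> Q * P = 1 ->
  A * P = P * B -> similar_elt A B.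
Proof.
move=> hPQ hQP hAB; exists P, Q; split => //; split => //.
by rewrite -mulrA hAB mulrA hQP mul1r.
Qed.

Lemma strongly_J_clean_similar A B :
  similar_elt A B -> strongly_J_clean B -> strongly_J_clean A.
Proof.
move=> [P [Q [hPQ [hQP ->]]]] [e [he [hc hJ]]].
have conj X Y : (P * X * Q) * (P * Y * Q) = P * (X * Y) * Q.
  by rewrite !mulrA -(mulrA (P * X) Q P) hQP mulr1.
have eA : A = P * (Q * A * P) * Q by rewrite !mulrA hPQ mul1r -mulrA hPQ mulr1.
exists (P * e * Q); split; first by rewrite conj he.
split; first by rewrite {1 2}eA !conj hc.
rewrite {1}eA (_ : _ - _ = P * (Q * A * P - e) * Q); last by noncomm_ring.
exact: jacobsonMr (jacobsonMl _ hJ).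
Qed.

(* Idempotents congruent modulo the radical are conjugate, via the unit
   P = E e + (1 - E)(1 - e), which satisfies P e = E P and P = 1 mod J. *)
Lemma conjugate_idempotents e E : e * e = e -> E * E = E -> jacobson (e - E) ->
  exists P Q, [/\ P * Q = 1, Q * P = 1 & E = P * e * Q].
Proof.
move=> he hE heE.
have hE' z : z * E * E = z * E by rewrite -mulrA hE.
have he' z : z * e * e = z * e by rewrite -mulrA he.
pose P := E * e + (1 - E) * (1 - e).
have JP : jacobson (1 - P).
  have -> : 1 - P = - (E * (e - E) + (E - 1) * (e - E)).
    by rewrite /P; expand; rewrite ?hE' ?he' ?hE ?he; abel.
  exact: jacobsonN (jacobsonD (jacobsonMl _ heE) (jacobsonMl _ heE)).
have hPe : P * e = E * P by rewrite /P; expand; rewrite ?hE' ?he' ?hE ?he; abel.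
have [Q []] := jacobson_unit JP; rewrite subKr => hPQ hQP.
exists P, Q; split => //.
by rewrite hPe -mulrA hPQ mulr1.
Qed.

Lemma clean_similar_commuting A e E :
  e * e = e -> A * e = e * A -> jacobson (A - e) -> E * E = E -> jacobson (e - E) ->
  exists B, [/\ similar_elt A B, E * B = B * E & jacobson (B - E)].
Proof.
move=> he hc hAe hE heE; have [P [Q [hPQ hQP ->]]] := conjugate_idempotents he hE heE.
exists (P * A * Q); split.
- by exists Q, P.
- by rewrite -!mulrA !(mulrA Q P) hQP !mul1r (mulrA e) -hc -mulrA.
- rewrite (_ : _ - _ = P * (A - e) * Q); last by noncomm_ring.
  exact: jacobsonMr (jacobsonMl _ hAe).
Qed.

End Similarity.

Section LocalRing.
Variable R : nzRingType.
Hypothesis Hloc : local_ring R.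

Lemma local_idempotent_mod_jacobson (x : R) :
  jacobson (x * x - x) -> exists i : bool, jacobson (x - i%:R).
Proof.
move=> Jx2; have [Jx|nJx] := pselect (jacobson x); first by exists false; rewrite subr0.
have [y [_ Jyx]] := Hloc.2 x nJx.
by exists true; rewrite /= mulr1n; jacobson_combine (jacobsonMl y Jx2, jacobsonMr x Jyx, Jyx).
Qed.

End LocalRing.

Section TwoByTwo.
Variables (R : nzRingType) (s : cent R).
Hypothesis HsJ : jacobson (cval s).
Local Notation J := (@jacobson R).
Local Notation M := (M2s s).
Local Notation S2 := (csq s).
Implicit Types a b c d p q r t : R.

Definition diag2 a d : M := mx2 s a 0 0 d.

Lemma mul_mx2 a b c d a' b' c' d' :
  mx2 s a b c d * mx2 s a' b' c' d' =
  mx2 s (a * a' + S2 * (b * c')) (a * b' + b * d')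
        (c * a' + d * c') (S2 * (c * b') + d * d').
Proof. by []. Qed.

Lemma sub_mx2 a b c d a' b' c' d' :
  mx2 s a b c d - mx2 s a' b' c' d' = mx2 s (a - a') (b - b') (c - c') (d - d').
Proof. by []. Qed.

Lemma one_mx2 : 1 = diag2 1 1. Proof. by []. Qed.

Lemma e11_mx2 a b c d : e11 (mx2 s a b c d) = a. Proof. by []. Qed.
Lemma e22_mx2 a b c d : e22 (mx2 s a b c d) = d. Proof. by []. Qed.

Lemma mx2_eta (A : M) : A = mx2 s (e11 A) (e12 A) (e21 A) (e22 A).
Proof. by case: A => [[[a b] c] d]. Qed.

Lemma mul_diag2 a d a' d' : diag2 a d * diag2 a' d' = diag2 (a * a') (d * d').
Proof. by rewrite mul_mx2 !(mul0r, mulr0, addr0, add0r). Qed.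

Lemma sub_diag2 a d a' d' : diag2 a d - diag2 a' d' = diag2 (a - a') (d - d').
Proof. by rewrite sub_mx2 subrr. Qed.

Lemma jacobson_csq : J S2. Proof. exact: jacobsonMl. Qed.

Lemma csq_expr2 : S2 = cval s ^+ 2. Proof. by rewrite expr2. Qed.

Lemma unit_diag2 p t : is_unit p -> is_unit t -> is_unit (diag2 p t).
Proof.
move=> [p' [hp1 hp2]] [t' [ht1 ht2]].
by exists (diag2 p' t'); rewrite !mul_diag2 hp1 hp2 ht1 ht2.
Qed.

(* [[1, b], [c, 1]] and [[1, -b], [-c, 1]] multiply, in either order, to
   diag(1 - s^2 b c, 1 - s^2 c b), a unit because s^2 lies in the radical. *)
Lemma unit_mx2_unipotent b c : is_unit (mx2 s 1 b c 1).
Proof.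
have JS := jacobson_csq.
have [D [hD1 hD2]] := unit_diag2 (jacobson_unit (jacobsonMr (b * c) JS))
                                 (jacobson_unit (jacobsonMr (c * b) JS)).
set N := mx2 s 1 (- b) (- c) 1.
have hr : mx2 s 1 b c 1 * N = diag2 (1 - S2 * (b * c)) (1 - S2 * (c * b)).
  by rewrite mul_mx2 /diag2; congr mx2; noncomm_ring.
have hl : N * mx2 s 1 b c 1 = diag2 (1 - S2 * (b * c)) (1 - S2 * (c * b)).
  by rewrite mul_mx2 /diag2; congr mx2; noncomm_ring.
apply: (@unit_of_inverses _ _ (D * N) (N * D)); first by rewrite -mulrA hl.
by rewrite mulrA hr.
Qed.

Lemma unit_mx2 p q r t : is_unit p -> is_unit t -> is_unit (mx2 s p q r t).
Proof.
move=> up ut; have [p' [hp1 _]] := up; have [t' [ht1 _]] := ut.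
have -> : mx2 s p q r t = diag2 p t * mx2 s 1 (p' * q) (t' * r) 1.
  by rewrite mul_mx2 !mulrA hp1 ht1; congr mx2; noncomm_ring.
exact: unitM (unit_diag2 up ut) (unit_mx2_unipotent _ _).
Qed.

Lemma jacobson_mx2P (A : M) : jacobson A <-> J (e11 A) /\ J (e22 A).
Proof.
have JS := jacobson_csq.
rewrite (mx2_eta A) e11_mx2 e22_mx2.
move: (e11 A) (e12 A) (e21 A) (e22 A) => a b c d; split.
- move=> /jacobsonP JA; split; apply/jacobsonP => r.
  + have [L] := JA (diag2 r 0).
    rewrite [diag2 r 0 * _]mul_mx2 one_mx2 sub_mx2 (mx2_eta L) mul_mx2 /mx2.
    by case=> h _ _ _; exists (e11 L); rewrite -[RHS]h; noncomm_ring.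
  + have [L] := JA (diag2 0 r).
    rewrite [diag2 0 r * _]mul_mx2 one_mx2 sub_mx2 (mx2_eta L) mul_mx2 /mx2.
    by case=> _ _ _ h; exists (e22 L); rewrite -[RHS]h; noncomm_ring.
- move=> [Ja Jd]; apply/jacobsonP => B.
  suff [Y [_ hY]] : is_unit (1 - B * mx2 s a b c d) by exists Y.
  rewrite (mx2_eta B) one_mx2 mul_mx2 sub_mx2.
  apply: unit_mx2; apply: jacobson_unit.
  - exact: jacobsonD (jacobsonMl _ Ja) (jacobsonMr _ JS).
  - exact: jacobsonD (jacobsonMr _ JS) (jacobsonMl _ Jd).
Qed.

Lemma jacobson_diag2P a d : jacobson (diag2 a d) <-> J a /\ J d.
Proof. exact: jacobson_mx2P. Qed.

Lemma idempotent_mod_jacobson_mx2 (e : M) :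
  e * e = e -> J (e11 e * e11 e - e11 e) /\ J (e22 e * e22 e - e22 e).
Proof.
have JS := jacobson_csq.
rewrite (mx2_eta e) e11_mx2 e22_mx2.
move: (e11 e) (e12 e) (e21 e) (e22 e) => a b c d.
rewrite mul_mx2 /mx2 => -[h11 _ _ h22].
split.
- by rewrite -[X in _ - X]h11; jacobson_combine (jacobsonMr (b * c) JS).
- by rewrite -[X in _ - X]h22; jacobson_combine (jacobsonMr (c * b) JS).
Qed.

Lemma idempotent_diag2_bool (i j : bool) :
  diag2 i%:R j%:R * diag2 i%:R j%:R = diag2 i%:R j%:R.
Proof. by rewrite mul_diag2 -!natrM !mulnb !andbb. Qed.

Lemma strongly_J_clean_diag2 (i j : bool) a d :
  J (a - i%:R) -> J (d - j%:R) -> strongly_J_clean (diag2 a d).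
Proof.
move=> Ja Jd; exists (diag2 i%:R j%:R); split; first exact: idempotent_diag2_bool.
split; first by rewrite !mul_diag2 !mulr_natr !mulr_natl.
by rewrite sub_diag2; apply/jacobson_diag2P.
Qed.

Lemma diag2_of_commute (i : bool) (B : M) :
  diag2 i%:R (~~ i)%:R * B = B * diag2 i%:R (~~ i)%:R -> B = diag2 (e11 B) (e22 B).
Proof.
rewrite (mx2_eta B) e11_mx2 e22_mx2.
move: (e11 B) (e12 B) (e21 B) (e22 B) => a b c d.
case: i; rewrite /= mulr1n !mul_mx2 !(mul0r, mulr0, mul1r, mulr1, addr0, add0r) /mx2.
- by case=> -> <-.
- by case=> <- ->.
Qed.

End TwoByTwo.

Section LocalTwoByTwo.
Variables (R : nzRingType) (s : cent R).
Hypotheses (Hloc : local_ring R) (HsJ : jacobson (cval s)).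
Local Notation J := (@jacobson R).
Local Notation M := (M2s s).

Lemma similar_diag2_of_clean (A e : M) (i : bool) :
  e * e = e -> A * e = e * A -> jacobson (A - e) ->
  jacobson (e - diag2 s i%:R (~~ i)%:R) ->
  exists a d, [/\ similar_elt A (diag2 s a d), J (a - i%:R) & J (d - (~~ i)%:R)].
Proof.
move=> he hc hAe heE.
have [B [hAB hBE JBE]] :=
  clean_similar_commuting he hc hAe (idempotent_diag2_bool _ _ _) heE.
rewrite (diag2_of_commute hBE) in hAB JBE; rewrite sub_diag2 in JBE.
by have [Ja Jd] := (jacobson_diag2P HsJ _ _).1 JBE; exists (e11 B), (e22 B).
Qed.

Lemma strongly_J_clean_mx2P (A : M) : strongly_J_clean A <->
  [\/ jacobson A, jacobson (1 - A),
      exists a d, [/\ similar_elt A (diag2 s a d), J (a - 1) & J d]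
    | exists a d, [/\ similar_elt A (diag2 s a d), J a & J (d - 1)]].
Proof.
split => [[e [he [hc hAe]]] | ].
- have [J11 J22] := idempotent_mod_jacobson_mx2 HsJ he.
  have [i Ji] := local_idempotent_mod_jacobson Hloc J11.
  have [j Jj] := local_idempotent_mod_jacobson Hloc J22.
  have heE : jacobson (e - diag2 s i%:R j%:R).
    by apply/(jacobson_mx2P HsJ); rewrite (mx2_eta e) sub_mx2.
  case: i j {Ji Jj} heE => [] [] heE.
  + move: heE; rewrite /= mulr1n -one_mx2 => heE.
    by apply: Or42; jacobson_combine (hAe, heE).
  + have [a [d [hsim Ja Jd]]] := similar_diag2_of_clean he hc hAe heE.
    by apply: Or43; exists a, d; split => //; rewrite -[d]subr0.
  + have [a [d [hsim Ja Jd]]] := similar_diag2_of_clean he hc hAe heE.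
    by apply: Or44; exists a, d; split => //; rewrite -[a]subr0.
  + move: heE; rewrite /= mulr0n (_ : diag2 s 0 0 = 0) // => heE.
    by apply: Or41; jacobson_combine (hAe, heE).
- case=> [JA | JA | [a [d [hsim Ja Jd]]] | [a [d [hsim Ja Jd]]]].
  + by exists 0; rewrite !mulr0 mul0r subr0.
  + by exists 1; rewrite !mulr1 mul1r; split => //; split => //; jacobson_combine JA.
  + apply: strongly_J_clean_similar hsim
      (strongly_J_clean_diag2 HsJ (i := true) (j := false) Ja _).
    by rewrite /= mulr0n subr0.
  + apply: strongly_J_clean_similar hsim
      (strongly_J_clean_diag2 HsJ (i := false) (j := true) _ Jd).
    by rewrite /= mulr0n subr0.
Qed.

End LocalTwoByTwo.

Section Companion.
Variables (R : nzRingType) (s : cent R).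
Hypothesis HsJ : jacobson (cval s).
Local Notation J := (@jacobson R).
Local Notation S2 := (csq s).
Implicit Types a b p t v x y : R.

Definition companion_roots x y v v' a b : Prop :=
  right_root (v * x * v' + y) (v * x * v' * y - cval s ^+ 2 * v) a /\
  right_root (x + y) (y * x - cval s ^+ 2 * v) b.

Lemma right_root_companion1 x y v v' a p : v' * v = 1 -> v * p + y = a ->
  right_root (v * x * v' + y) (v * x * v' * y - cval s ^+ 2 * v) a <->
  x * p + S2 = p * a.
Proof.
move=> hv' ha; have hz z : z * v' * v = z by rewrite -mulrA hv' mulr1.
rewrite /right_root (_ : _ + _ = v * (p * a - (x * p + S2))); last first.
  by rewrite -csq_expr2 -ha expr2 -(csqC s v); expand; rewrite ?hz; abel.
split => [h | ->]; last by rewrite subrr mulr0.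
apply/eqP; rewrite eq_sym -subr_eq0; apply/eqP.
by rewrite -[LHS]mul1r -hv' -mulrA h mulr0.
Qed.

Lemma right_root_companion2 x y v b t : x + t = b ->
  right_root (x + y) (y * x - cval s ^+ 2 * v) b <-> S2 * v + y * t = t * b.
Proof.
move=> hb; rewrite /right_root (_ : _ + _ = t * b - (S2 * v + y * t)); last first.
  by rewrite -csq_expr2 -hb expr2; noncomm_ring.
split => [h | ->]; last exact: subrr.
by move/eqP: h; rewrite subr_eq0 => /eqP ->.
Qed.

(* With P = [[p, 1], [1, t]], p = v^-1 (a - y) and t = b - x, the two root
   conditions are the diagonal entries of [[x, 1], [v, y]] P = P diag(a, b). *)
Lemma companion_similar_diag2 x y v v' a b : v * v' = 1 -> v' * v = 1 ->
  is_unit (a - y) -> is_unit (b - x) -> companion_roots x y v v' a b ->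
  similar_elt (mx2 s x 1 v y) (diag2 s a b).
Proof.
move=> hv hv' ua ub [ra rb]; set p := v' * (a - y); set t := b - x.
have hp : v * p + y = a by rewrite /p mulrA hv mul1r subrK.
have ht : x + t = b by rewrite /t addrC subrK.
have [Q [hPQ hQP]] : is_unit (mx2 s p 1 1 t).
  by apply: (unit_mx2 HsJ) ub; apply: unitM ua; exists v.
apply: (similar_of_intertwine hPQ hQP).
have hra := (right_root_companion1 _ hv' hp).1 ra.
have hrb := (right_root_companion2 _ _ ht).1 rb.
by rewrite /diag2 !mul_mx2 !(mul1r, mulr1, mul0r, mulr0, addr0, add0r) hra hrb hp ht.
Qed.

Lemma diag2_similar_companion a b v v' : is_unit (a - b) ->
  v * (a - b) = (b - a + S2) * b - a * (b - a + S2) -> v' * v = 1 ->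
  similar_elt (diag2 s a b) (mx2 s (a - S2) 1 v (a - v)) /\
  companion_roots (a - S2) (a - v) v v' a b.
Proof.
move=> uab hv hv'; set t := b - a + S2.
have ht : a - S2 + t = b by rewrite /t; abel.
have hp : v * 1 + (a - v) = a by rewrite mulr1 addrC subrK.
have hx : (a - S2) * 1 + S2 = 1 * a by rewrite mulr1 mul1r subrK.
have hy : S2 * v + (a - v) * t = t * b.
  have -> : t * b = v * (a - b) + a * t by rewrite hv subrK.
  by rewrite /t -(csqC s v); noncomm_ring.
have [Q [hPQ hQP]] : is_unit (mx2 s 1 1 1 t).
  apply: (unit_mx2 HsJ); first by exists 1; rewrite mulr1.
  rewrite (_ : t = - (a - b - S2)); last by rewrite /t; abel.
  by apply/unitN/unit_subr_jacobson => //; exact: jacobson_csq.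
split; last split.
- apply/similar_sym/(similar_of_intertwine hPQ hQP).
  rewrite /diag2 !mul_mx2 !(mul1r, mulr1, mul0r, mulr0, addr0, add0r) hy ht.
  by rewrite subrK [v + _]addrC subrK.
- exact: (right_root_companion1 _ hv' hp).2 hx.
- exact: (right_root_companion2 _ _ ht).2 hy.
Qed.

Lemma companion_entry_mod_jacobson a b v : is_unit (a - b) ->
  v * (a - b) = (b - a + S2) * b - a * (b - a + S2) ->
  J (a * b - b * a) -> J (v - (a - b)).
Proof.
move=> [c [hc _]] hv Jab.
have -> : v - (a - b) = (v * (a - b) - (a - b) * (a - b)) * c.
  by rewrite mulrBl -!mulrA hc !mulr1.
have JSb := jacobsonMr b (jacobson_csq HsJ); have JaS := jacobsonMl a (jacobson_csq HsJ).
by rewrite hv; apply: jacobsonMr; jacobson_combine (Jab, JSb, JaS).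
Qed.

End Companion.

Section CompanionForms.
Variables (R : nzRingType) (s : cent R).
Hypothesis HsJ : jacobson (cval s).
Local Notation J := (@jacobson R).
Local Notation S2 := (csq s).

(* Conditions (3) and (4) of the theorem; the suffix records which diagonal
   entry of the array [[_, 1], [v, _]] is congruent to 1 and which lies in J. *)
Definition similar_to_companion_1J (A : M2s s) : Prop :=
  exists (u v v' w : R),
    [/\ J (u - 1) /\ (v * v' = 1 /\ v' * v = 1) /\ J w,
        similar_elt A (mx2 s u 1 v w),
        (exists t : R, J (t - 1) /\
           right_root (v * u * v' + w) (v * u * v' * w - cval s ^+ 2 * v) t)
      & (exists t : R, J t /\ right_root (u + w) (w * u - cval s ^+ 2 * v) t)].

Definition similar_to_companion_J1 (A : M2s s) : Prop :=
  exists (u v v' w : R),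
    [/\ J (u - 1) /\ (v * v' = 1 /\ v' * v = 1) /\ J w,
        similar_elt A (mx2 s w 1 v u),
        (exists t : R, J t /\
           right_root (u + v * w * v') (v * w * v' * u - cval s ^+ 2 * v) t)
      & (exists t : R, J (t - 1) /\ right_root (u + w) (u * w - cval s ^+ 2 * v) t)].

Lemma exists_companion_entry a d : is_unit (a - d) -> J (a * d - d * a) ->
  exists v, v * (a - d) = (d - a + S2) * d - a * (d - a + S2) /\ J (v - (a - d)).
Proof.
move=> uad Jad; have [c [_ hc]] := uad.
set x := (d - a + S2) * d - a * (d - a + S2).
have hv : x * c * (a - d) = x by rewrite -mulrA hc mulr1.
by exists (x * c); split; last exact (companion_entry_mod_jacobson HsJ uad hv Jad).
Qed.

Lemma similar_to_companion_1JP (A : M2s s) :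
  similar_to_companion_1J A <->
  exists a d, [/\ similar_elt A (diag2 s a d), J (a - 1) & J d].
Proof.
have JS := jacobson_csq HsJ.
split.
- case=> u [v [v' [w [[Ju [[hv hv'] Jw]] hsim [a [Ja ra]] [d [Jd rd]]]]]].
  exists a, d; split => //.
  apply: similar_trans hsim (companion_similar_diag2 HsJ hv hv' _ _ (conj ra rd)).
  + by apply: unit_of_jacobson; jacobson_combine (Ja, Jw).
  + by apply: unit_of_jacobsonN; jacobson_combine (Jd, Ju).
- case=> a [d [hsim Ja Jd]].
  have uad : is_unit (a - d) by apply: unit_of_jacobson; jacobson_combine (Ja, Jd).
  have Jad : J (a * d - d * a).
    by jacobson_combine (jacobsonMr d Ja, jacobsonMl d Ja).
  have [v [hv Jv]] := exists_companion_entry uad Jad.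
  have [v' [hvv' hv'v]] : is_unit v by apply: unit_of_jacobson; jacobson_combine (Jv, Ja, Jd).
  have [hs [ra rd]] := diag2_similar_companion HsJ uad hv hv'v.
  exists (a - S2), v, v', (a - v); split.
  + by split; [jacobson_combine (Ja, JS) | split => //; jacobson_combine (Jv, Jd)].
  + exact: similar_trans hsim hs.
  + by exists a.
  + by exists d.
Qed.

Lemma similar_to_companion_J1P (A : M2s s) :
  similar_to_companion_J1 A <->
  exists a d, [/\ similar_elt A (diag2 s a d), J a & J (d - 1)].
Proof.
have JS := jacobson_csq HsJ.
split.
- case=> u [v [v' [w [[Ju [[hv hv'] Jw]] hsim [a [Ja ra]] [d [Jd rd]]]]]].
  exists a, d; split => //; apply: similar_trans hsim (companion_similar_diag2 HsJ hv hv' _ _ _).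
  + by apply: unit_of_jacobsonN; jacobson_combine (Ja, Ju).
  + by apply: unit_of_jacobson; jacobson_combine (Jd, Jw).
  + by split; rewrite [X in right_root X]addrC.
- case=> a [d [hsim Ja Jd]].
  have uad : is_unit (a - d) by apply: unit_of_jacobsonN; jacobson_combine (Ja, Jd).
  have Jad : J (a * d - d * a).
    by jacobson_combine (jacobsonMr d Ja, jacobsonMl d Ja).
  have [v [hv Jv]] := exists_companion_entry uad Jad.
  have [v' [hvv' hv'v]] : is_unit v by apply: unit_of_jacobsonN; jacobson_combine (Jv, Ja, Jd).
  have [hs [ra rd]] := diag2_similar_companion HsJ uad hv hv'v.
  exists (a - v), v, v', (a - S2); split.
  + by split; [jacobson_combine (Jv, Jd) | split => //; jacobson_combine (Ja, JS)].
  + exact: similar_trans hsim hs.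
  + by exists a; rewrite [X in right_root X]addrC.
  + by exists d; rewrite [X in right_root X]addrC.
Qed.

End CompanionForms.

Theorem theorem2p16 (R : nzRingType) (s : cent R)
  (Hloc : local_ring R) (HsJ : jacobson (cval s)) (A : M2s s) :
  strongly_J_clean A <->
  [\/ jacobson A,
      jacobson (1 - A),
      (exists (u v v' w : R),
          [/\ jacobson (u - 1) /\ (v * v' = 1 /\ v' * v = 1) /\ jacobson w,
              similar_elt A (mx2 s u 1 v w),
              (exists t : R, jacobson (t - 1) /\
                 right_root (v * u * v' + w) (v * u * v' * w - cval s ^+ 2 * v) t)
            & (exists t : R, jacobson t /\
                 right_root (u + w) (w * u - cval s ^+ 2 * v) t)])
    | (exists (u v v' w : R),
          [/\ jacobson (u - 1) /\ (v * v' = 1 /\ v' * v = 1) /\ jacobson w,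
              similar_elt A (mx2 s w 1 v u),
              (exists t : R, jacobson t /\
                 right_root (u + v * w * v') (v * w * v' * u - cval s ^+ 2 * v) t)
            & (exists t : R, jacobson (t - 1) /\
                 right_root (u + w) (u * w - cval s ^+ 2 * v) t)])].
Proof.
rewrite (strongly_J_clean_mx2P Hloc HsJ).
split=> -[JA | JA | h | h];
  by [ exact: Or41 | exact: Or42
     | exact/Or43/(similar_to_companion_1JP HsJ)
     | exact/Or44/(similar_to_companion_J1P HsJ) ].
Qed.
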